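(* For $k\ge1$, the linear simplex $\alpha$ code $\mathcal{S}_k^\alpha$ has type $(q^{sk};k,0,\dots,0)$.
   Context: Let $R$ be a finite commutative chain ring with maximal ideal $\langle\gamma\rangle$, nilpotency index $s$ and residue field $R/\langle\gamma\rangle\cong\mathbb{F}_q$. Fix coset representatives $T=\{e_0,\dots,e_{q-1}\}$ with $e_0=0,e_1=1$, ordered $e_0<\dots<e_{q-1}$; each $r\in R$ is uniquely $\sum_{i=0}^{s-1}r_i\gamma^i$, $r_i\in T$; order $R$ by $x>y$ iff $x_i>y_i$ in $T$ for the largest $i$ with $x_i\neq y_i$; list $R=\{\rho_0,\dots,\rho_{q^s-1}\}$ increasingly. $\mathbf{a}^{(m)}$ is the constant vector of length $m$. Define $G_1^\alpha=(\rho_0\ \cdots\ \rho_{q^s-1})$ and, for $k>1$, $G_k^\alpha$ as the $k\times q^{sk}$ matrix of $q^s$ column blocks, the $j$-th having first row $\boldsymbol{\rho_j}^{(q^{s(k-1)})}$ and $G_{k-1}^\alpha$ below. $\mathcal{S}_k^\alpha$ is the $R$-submodule of $R^{q^{sk}}$ generated by the rows of $G_k^\alpha$. A linear code $\mathcal{C}\subseteq R^n$ (an $R$-submodule) has type $(n;t_1,\dots,t_s)$ if $\mathcal{C}\cong\bigoplus_{i=1}^s (R/\langle\gamma^{s-i+1}\rangle)^{t_i}$ as $R$-modules (equivalently, up to column permutations and multiplication of columns by units it has a standard-form generator matrix with $t_i$ rows divisible exactly by $\gamma^{i-1}$ forming the diagonal block $\gamma^{i-1}I_{t_i}$); these $t_i$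 are unique. Type $(n;k,0,\dots,0)$ means $\mathcal{C}$ is free of rank $k$. *)

From HB Require Import structures.
From mathcomp Require Import all_boot all_order all_algebra.
Set Implicit Arguments. Unset Strict Implicit. Unset Printing Implicit Defensive.
Import GRing.Theory.
Local Open Scope ring_scope.

Section ChainRing.
Variables (R : finComNzRingType) (gamma : R) (s q : nat) (T : seq R).

Definition in_gamma (x : R) : bool := [exists y : R, x == gamma * y].

(* R is a finite commutative chain ring with maximal ideal <gamma> of
   nilpotency index s: every element outside <gamma> is a unit,
   gamma^s = 0 and gamma^(s-1) <> 0. *)
Definition chain_ring_data : Prop :=
  [/\ forall x : R, ~~ in_gamma x -> [exists y : R, x * y == 1],
      gamma ^+ s = 0 & gamma ^+ s.-1 != 0].

(* T = {e_0,...,e_{q-1}} (listed in its order e_0 < ... < e_{q-1})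
   is a set of coset representatives of R/<gamma>, e_0 = 0, e_1 = 1. *)
Definition coset_reps : Prop :=
  [/\ size T = q, T`_0 = 0, T`_1 = 1 &
      forall x : R, exists! i : 'I_q, in_gamma (x - T`_i)].

Definition digits (r : R) : option {ffun 'I_s -> 'I_q} :=
  [pick d : {ffun 'I_s -> 'I_q} | r == \sum_(i < s) T`_(d i) * gamma ^+ i].

Definition chain_lt (x y : R) : bool :=
  match digits x, digits y with
  | Some dx, Some dy =>
      [exists i : 'I_s, (dx i < dy i)%N &&
         [forall j : 'I_s, (i < j)%N ==> (dx j == dy j)]]
  | _, _ => false
  end.

Definition chain_le (x y : R) : bool := (x == y) || chain_lt x y.

Definition rho (j : nat) : R := nth 0 (sort chain_le (enum R)) j.

(* G_k^alpha : the k x q^(sk) matrix; column block j of G_k has first row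
   constant rho_j and G_{k-1} below, which unfolds to the formula:
   entry (i, j) = rho_{ (j div q^(s(k-1-i))) mod q^s }. *)
Definition simplex_alpha (k : nat) : 'M[R]_(k, q ^ (s * k)) :=
  \matrix_(i < k, j < q ^ (s * k))
     rho ((j %/ q ^ (s * (k - 1 - i))) %% q ^ s).

Definition simplex_code (k : nat) : pred 'rV[R]_(q ^ (s * k)) :=
  fun v => [exists x : 'rV[R]_k, v == x *m simplex_alpha k].

End ChainRing.

(* A linear code C in R^n has type (n; k, 0, ..., 0), i.e. C is isomorphic as
   an R-module to R^k (free of rank k). *)
Definition free_of_rank (R : comNzRingType) (n : nat) (C : pred 'rV[R]_n)
    (k : nat) : Prop :=
  exists f : {linear 'rV[R]_k -> 'rV[R]_n},
    injective f /\ (forall v, C v <-> exists x, v = f x).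

Arguments simplex_alpha {R} gamma s q T k.
Arguments simplex_code {R} gamma s q T k _.
Arguments digits {R} gamma s q T r.
Arguments rho {R} gamma s q T j.

(** Column [0] of [G_k] is constant [rho_0], and column [a * q^(s(k-1-i))],
    whose base-[q^s] index has the single digit [a] in position [k-1-i], has
    [rho_a] in row [i] and [rho_0] elsewhere.  Choosing [rho_a = rho_0 + 1],
    these two columns differ by the [i]-th unit vector, so [x G_k] determines
    [x] and [x |-> x G_k] is an isomorphism [R^k ~ S_k].  Such an [a < q^s]
    exists because [gamma]-adic expansion gives [#|R| <= q^s]. *)

From HB Require Import structures.
From mathcomp Require Import all_boot all_order all_algebra zify.
Set Implicit Arguments.
Unset Strict Implicit.
Unset Printing Implicit Defensive.
Import GRing.Theory.
Local Open Scope ring_scope.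

Lemma digit_mul_expn_lt (Q a e k : nat) :
  (a < Q)%N -> (e < k)%N -> (a * Q ^ e < Q ^ k)%N.
Proof.
move=> aQ ek; have Q_gt0 : (0 < Q)%N by apply: leq_ltn_trans aQ.
apply: (@leq_trans (Q * Q ^ e)); first by rewrite ltn_pmul2r ?expn_gt0 ?Q_gt0.
by rewrite -expnS leq_pexp2l.
Qed.

Lemma digit_mul_expn (Q a e e' : nat) :
  (a < Q)%N -> (a * Q ^ e %/ Q ^ e' %% Q = if e == e' then a else 0)%N.
Proof.
move=> aQ; have Q_gt0 : (0 < Q)%N by apply: leq_ltn_trans aQ.
case: ltngtP => [ee'|e'e|->].
- by rewrite divn_small ?mod0n ?digit_mul_expn_lt.
- rewrite -(subnKC (ltnW e'e)) expnD mulnCA mulKn ?expn_gt0 ?Q_gt0 //.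
  by rewrite -(subnSK e'e) expnS mulnCA modnMr.
- by rewrite mulnK ?expn_gt0 ?Q_gt0 // modn_small.
Qed.

Section UnitColumnDifferences.
Variables (R : pzRingType) (m n : nat) (A : 'M[R]_(m, n)).
Variables (j0 : 'I_n) (j : 'I_m -> 'I_n).
Hypothesis colA : forall i i', A i' (j i) - A i' j0 = (i' == i)%:R.

Lemma mulmx_col_diff (x : 'rV[R]_m) i :
  (x *m A) 0 (j i) - (x *m A) 0 j0 = x 0 i.
Proof.
rewrite !mxE -sumrB (bigD1 i) //= -mulrBr colA eqxx mulr1 big1 ?addr0 //.
by move=> i' /negbTE i'i; rewrite -mulrBr colA i'i mulr0.
Qed.

Lemma mulmxr_inj : injective (@mulmxr R 1 m n A).
Proof.
by move=> x y /= xyA; apply/rowP => i; rewrite -!mulmx_col_diff xyA.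
Qed.

End UnitColumnDifferences.

Lemma free_of_rank_mulmx (R : finComNzRingType) (k n : nat) (A : 'M[R]_(k, n)) :
  injective (@mulmxr R 1 k n A) ->
  free_of_rank (fun v : 'rV[R]_n => [exists x : 'rV[R]_k, v == x *m A]) k.
Proof.
move=> injA; exists (mulmxr A); split=> // v.
by split=> [/existsP [x /eqP ->] | [x ->]]; [exists x | apply/existsP; exists x].
Qed.

Section GammaAdic.
Variables (R : finComNzRingType) (gamma : R) (s q : nat) (T : seq R).
Hypothesis reps : coset_reps gamma q T.

Lemma gamma_adic_expansion (n : nat) (r : R) :
  exists (f : nat -> 'I_q) (y : R),
    r = \sum_(i < n) T`_(f i) * gamma ^+ i + gamma ^+ n * y.
Proof.
case: reps => _ _ _ uniq_rep; elim: n r => [|n IHn] r.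
  have [i0 _] := uniq_rep r.
  by exists (fun=> i0), r; rewrite big_ord0 add0r mul1r.
have [i0 [/existsP [y /eqP r_i0]] _] := uniq_rep r.
have [f [y' y_f]] := IHn y.
exists (fun i => if i is i'.+1 then f i' else i0), y'.
rewrite big_ord_recl /= mulr1 -[r](subrK T`_i0) r_i0 y_f mulrDr mulr_sumr.
rewrite [_ + T`_i0]addrC addrA exprS mulrA; congr (_ + _ + _).
by apply: eq_bigr => i _; rewrite exprS mulrCA.
Qed.

Hypothesis gamma_nil : gamma ^+ s = 0.

Lemma card_chain_ring_le : (#|R| <= q ^ s)%N.
Proof.
pose expand (d : {ffun 'I_s -> 'I_q}) := \sum_(i < s) T`_(d i) * gamma ^+ i.
have onto : [set: R] \subset expand @: [set: {ffun 'I_s -> 'I_q}].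
  apply/subsetP => r _; have [f [y ->]] := gamma_adic_expansion s r.
  apply/imsetP; exists [ffun i : 'I_s => f i] => //.
  by rewrite gamma_nil mul0r addr0; apply: eq_bigr => i _; rewrite ffunE.
rewrite -cardsT (leq_trans (subset_leq_card onto)) ?(leq_trans (leq_imset_card _ _)) //.
by rewrite cardsT card_ffun !card_ord.
Qed.

Lemma rho_onto (r : R) : exists2 a, (a < q ^ s)%N & rho gamma s q T a = r.
Proof.
rewrite /rho; set le := chain_le gamma s q T.
have r_in : r \in sort le (enum R) by rewrite mem_sort mem_enum.
exists (index r (sort le (enum R))); last exact: nth_index.
by rewrite (leq_trans _ card_chain_ring_le) // cardE -(size_sort le) index_mem.
Qed.

End GammaAdic.

Section SimplexColumns.
Variables (R : finComNzRingType) (gamma : R) (s q : nat) (T : seq R) (k : nat).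
Local Notation G := (simplex_alpha gamma s q T k).
Local Notation rho := (rho gamma s q T).

Lemma simplex_alpha_col0 (i' : 'I_k) (j : 'I_(q ^ (s * k))) :
  val j = 0%N -> G i' j = rho 0.
Proof. by rewrite mxE => ->; rewrite div0n mod0n. Qed.

Lemma simplex_digit_col_lt (i : 'I_k) (a : nat) :
  (a < q ^ s)%N -> (a * q ^ (s * (k - 1 - i)) < q ^ (s * k))%N.
Proof. by move=> aQ; rewrite !expnM digit_mul_expn_lt //; have := ltn_ord i; lia. Qed.

Lemma simplex_alpha_digit_col (a : nat) (i i' : 'I_k) (j : 'I_(q ^ (s * k))) :
  (a < q ^ s)%N -> val j = (a * q ^ (s * (k - 1 - i)))%N ->
  G i' j = if i' == i then rho a else rho 0.
Proof.
move=> aQ j_a; rewrite mxE j_a !expnM digit_mul_expn //.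
have same_digit : (k - 1 - i == k - 1 - i')%N = (i' == i).
  apply/eqP/eqP => [e | -> //]; apply: val_inj => /=.
  by have := ltn_ord i; have := ltn_ord i'; lia.
by rewrite same_digit; case: (i' == i).
Qed.

End SimplexColumns.

Theorem proposition3p1 (R : finComNzRingType) (gamma : R) (s q : nat)
    (T : seq R) (k : nat) :
  chain_ring_data gamma s -> coset_reps gamma q T -> (1 <= k)%N ->
  free_of_rank (simplex_code gamma s q T k) k.
Proof.
move=> [_ gamma_nil _] reps _.
have [a aQ rho_a] := rho_onto reps gamma_nil (rho gamma s q T 0 + 1).
have rho_step : rho gamma s q T a - rho gamma s q T 0 = 1.
  by rewrite rho_a addrAC subrr add0r.
have Qk_gt0 : (0 < q ^ (s * k))%N by rewrite expnM expn_gt0 (leq_ltn_trans _ aQ).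
pose j0 := Ordinal Qk_gt0.
pose j (i : 'I_k) := Ordinal (simplex_digit_col_lt i aQ).
apply/free_of_rank_mulmx/(mulmxr_inj (j0 := j0) (j := j)) => i i'.
rewrite (simplex_alpha_digit_col (i := i) _ _ _ aQ) // simplex_alpha_col0 //.
by case: eqP => _; rewrite ?rho_step ?subrr.
Qed.
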